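(* Suppose there exist $R>r>0$ such that $g(x)\le\min\{Rx+g(x^* )-Rx^*,\ rx+g(x^* )-rx^*\}$ for all $x\in[0,1]$. Then for every $c\ge1/(R-r)$, $$\lambda g(x^* )-\sup_{\mathbf x\in[0,1]^c}\mathcal R(\mathbf x)\ \ge\ \lambda\min\{1,r/2\}\,x^*\sqrt{(R-r)/c}.$$
   Context: Setting. Fix $c\in\mathbb N$ (number of identical units of a single reusable resource), an arrival rate $\lambda>0$ and a mean usage duration $d>0$, with $x^*:=c/(\lambda d)\in(0,1)$. Let $g:[0,1]\to\mathbb R$ be concave, non-decreasing, with $g(0)=0$ (the reward function). A stock-dependent policy is a vector $\mathbf x=(x_1,\dots,x_c)\in[0,1]^c$, where $x_j$ is the admission probability used when exactly $j$ units are available (the admission probability is $0$ when no unit is available). Its steady-state distribution is the unique probability vector $\pi=(\pi_0,\dots,\pi_c)$ satisfying $\pi_j\lambda x_j=\pi_{j-1}(c-j+1)/d$ for all $j\in\{1,\dots,c\}$, and its long-run average reward is $\mathcal R(\mathbf x)=\sum_{j=1}^c\pi_j\lambda g(x_j)$. *)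

From HB Require Import structures.
From mathcomp Require Import all_boot all_order all_algebra.
From mathcomp Require Import reals.
Set Implicit Arguments. Unset Strict Implicit. Unset Printing Implicit Defensive.
Import Order.TTheory GRing.Theory Num.Theory.
Local Open Scope ring_scope.

Section Defs.
Variable R : realType.

Definition concave01 (g : R -> R) : Prop :=
  forall x y t : R, 0 <= x <= 1 -> 0 <= y <= 1 -> 0 <= t <= 1 ->
    t * g x + (1 - t) * g y <= g (t * x + (1 - t) * y).

Definition nondecr01 (g : R -> R) : Prop :=
  forall x y : R, 0 <= x -> x <= y -> y <= 1 -> g x <= g y.

Definition xstar (c : nat) (lam d : R) : R := c%:R / (lam * d).

(* a stock-dependent policy (x_1, ..., x_c) in [0,1]^c, stored as x : nat -> R
   (only indices 1..c are relevant) *)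
Definition policy (c : nat) (x : nat -> R) : Prop :=
  forall j : nat, (1 <= j <= c)%N -> 0 <= x j <= 1.

Definition steady_state (c : nat) (lam d : R) (x : nat -> R) (pi : nat -> R) : Prop :=
  [/\ forall j : nat, (j <= c)%N -> 0 <= pi j,
      \sum_(0 <= j < c.+1) pi j = 1 &
      forall j : nat, (1 <= j <= c)%N ->
        pi j * lam * x j = pi j.-1 * (c.+1 - j)%:R / d].

Definition reward (c : nat) (lam : R) (g : R -> R) (x pi : nat -> R) : R :=
  \sum_(1 <= j < c.+1) pi j * lam * g (x j).

End Defs.

(** Write [s] for [x*] and [b] for [g s].  The reward gap [b - reward/lam] is split state
    by state: at state [j >= 1] the two supporting lines of [g] at [s] give a gap of at
    least [r (s - x_j) + (R - r) (s - x_j)^+], and [b >= R s] bounds the gap at state [0].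
    The balance equations telescope [sum_j pi_j (s - x_j)] into [s (E/c - pi_0)], where
    [E] is the mean stock level, and also show that no [pi_n] exceeds
    [B := pi_0 + (sum_j pi_j (s - x_j)^+) / s].  Hence the gap is at least
    [s (r E / c + (R - r) B)].  A distribution whose masses are all at most [B] has mean
    [E >= N (1 - N B)] for every integer [N]; taking [N] the integer part of
    [c sqrt((R - r)/c)] trades the two terms off against each other. *)
From HB Require Import structures.
From mathcomp Require Import all_boot all_order all_algebra.
From mathcomp Require Import reals.
From mathcomp Require Import ring lra zify.
Set Implicit Arguments. Unset Strict Implicit. Unset Printing Implicit Defensive.
Import Order.TTheory GRing.Theory Num.Theory.
Local Open Scope ring_scope.

Lemma sum_nat_lt_indicator (R : pzSemiRingType) (m N : nat) :
  \sum_(0 <= j < m) ((j < N)%N%:R : R) = (minn m N)%:R.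
Proof.
elim: m => [|m IH]; first by rewrite big_geq // min0n.
rewrite big_nat_recr //= IH -natrD; congr (_%:R).
by case: (ltnP m N) => m_N /=; lia.
Qed.

Lemma mean_ge_of_bounded_probs (R : realFieldType) (n N : nat) (p : nat -> R) (B : R) :
  (forall j, (j <= n)%N -> 0 <= p j) ->
  \sum_(0 <= j < n.+1) p j = 1 ->
  (forall j, (j <= n)%N -> p j <= B) ->
  N%:R * (1 - N%:R * B) <= \sum_(0 <= j < n.+1) j%:R * p j.
Proof.
move=> p_ge0 p_sum1 p_leB.
have B_ge0 : 0 <= B by apply: le_trans (p_leB 0%N _) => //; apply: p_ge0.
apply: (@le_trans _ _ (\sum_(0 <= j < n.+1) (N%:R * p j - N%:R * B * (j < N)%N%:R))).
  rewrite sumrB -!mulr_sumr p_sum1 sum_nat_lt_indicator mulrBr mulr1 lerB //.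
  by rewrite -mulrA ler_wpM2l // mulrC ler_wpM2r // ler_nat geq_minr.
apply: ler_sum_nat => j /andP [_ /= j_le_n].
have pj_ge0 := p_ge0 j j_le_n.
case: (ltnP j N) => [_ | N_le_j]; last by rewrite mulr0 subr0 ler_wpM2r // ler_nat.
have : N%:R * (p j - B) <= 0 by rewrite mulr_ge0_le0 // subr_le0 p_leB.
rewrite mulr1 -mulrBr => /le_trans; apply; exact: mulr_ge0.
Qed.

Lemma kinked_gap_ge (R : realFieldType) (Rb rb b xs y gy : R) :
  rb <= Rb -> gy <= Num.min (Rb * y + b - Rb * xs) (rb * y + b - rb * xs) ->
  rb * (xs - y) + (Rb - rb) * Num.max (xs - y) 0 <= b - gy.
Proof.
move=> rb_le_Rb; rewrite le_min => /andP [gyR gyr]; case: (lerP 0 (xs - y)) => _.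
- have -> : rb * (xs - y) + (Rb - rb) * (xs - y) = Rb * xs - Rb * y by ring.
  lra.
- have -> : rb * (xs - y) + (Rb - rb) * 0 = rb * xs - rb * y by ring.
  lra.
Qed.

Lemma steady_state_balance (R : realType) (c : nat) (lam d : R) (x pi : nat -> R) :
  0 < lam -> 0 < d -> c%:R != 0 :> R -> steady_state c lam d x pi ->
  forall j, (1 <= j <= c)%N ->
    pi j * x j = xstar c lam d * pi j.-1 * (c.+1 - j)%:R / c%:R.
Proof.
move=> lam_gt0 d_gt0 c_neq0 [_ _ balance] j j_range.
have -> : pi j * x j = pi j * lam * x j / lam by field; rewrite gt_eqF.
by rewrite balance // /xstar; field; rewrite c_neq0 !gt_eqF.
Qed.

Section BalanceEquations.
Variables (R : realFieldType) (c : nat) (xs : R) (x pi : nat -> R).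
Hypothesis c_neq0 : c%:R != 0 :> R.
Hypothesis balance : forall j, (1 <= j <= c)%N ->
  pi j * x j = xs * pi j.-1 * (c.+1 - j)%:R / c%:R.

Definition mean_stock : R := \sum_(0 <= j < c.+1) j%:R * pi j.
Definition shortfall : R := \sum_(1 <= j < c.+1) pi j * Num.max (xs - x j) 0.

Lemma sum_gap_telescope n : (n <= c)%N ->
  \sum_(1 <= j < n.+1) pi j * (xs - x j) =
  xs * (pi n - pi 0%N + \sum_(0 <= i < n) pi i * i%:R / c%:R).
Proof.
elim: n => [|n IH] n_lt_c; first by rewrite !big_geq // subrr addr0 mulr0.
rewrite big_nat_recr //= IH ?(ltnW n_lt_c) // big_nat_recr //= mulrBr balance //=.
by rewrite subSS natrB ?(ltnW n_lt_c) //; field.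
Qed.

Lemma sum_gap_mean_stock :
  \sum_(1 <= j < c.+1) pi j * (xs - x j) = xs * (mean_stock / c%:R - pi 0%N).
Proof.
rewrite sum_gap_telescope // /mean_stock big_nat_recr //=.
have -> : \sum_(0 <= i < c) pi i * i%:R / c%:R = (\sum_(0 <= i < c) i%:R * pi i) / c%:R.
  by rewrite mulr_suml; apply: eq_bigr => i _; rewrite [pi i * _]mulrC.
by field.
Qed.

Hypotheses (pi_ge0 : forall j, (j <= c)%N -> 0 <= pi j) (xs_gt0 : 0 < xs).

Lemma shortfall_term_ge0 j : (j <= c)%N -> 0 <= pi j * Num.max (xs - x j) 0.
Proof. by move=> j_le_c; rewrite mulr_ge0 ?pi_ge0 // le_max lexx orbT. Qed.

Lemma shortfall_ge0 : 0 <= shortfall.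
Proof.
rewrite /shortfall big_nat_cond; apply: sumr_ge0 => j /andP [/andP [_ j_le_c] _].
exact: shortfall_term_ge0.
Qed.

Lemma pi_le_shortfall n : (n <= c)%N -> pi n <= pi 0%N + shortfall / xs.
Proof.
move=> n_le_c.
have partial_le : \sum_(1 <= j < n.+1) pi j * (xs - x j) <= shortfall.
  rewrite /shortfall [X in _ <= X](big_cat_nat _ (n := n.+1)) //=.
  rewrite -[X in X <= _]addr0; apply: lerD.
    apply: ler_sum_nat => j /andP [_ j_le_n].
    rewrite ler_wpM2l ?le_max ?lexx // pi_ge0 //.
    exact: leq_trans n_le_c.
  rewrite big_nat_cond; apply: sumr_ge0 => j /andP [/andP [_ j_le_c] _].
  exact: shortfall_term_ge0.
have tail_ge0 : 0 <= \sum_(0 <= i < n) pi i * i%:R / c%:R.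
  rewrite big_nat_cond; apply: sumr_ge0 => i /andP [/andP [_ i_lt_n] _].
  by rewrite divr_ge0 // mulr_ge0 // pi_ge0 // ltnW // (leq_trans i_lt_n).
rewrite sum_gap_telescope // in partial_le.
have : pi n - pi 0%N <= shortfall / xs.
  rewrite ler_pdivlMr // mulrC; apply: le_trans partial_le.
  by rewrite ler_wpM2l ?lerDl // ltW.
lra.
Qed.

Variables (g : R -> R) (b rb Rb : R).
Hypotheses (pi_sum1 : \sum_(0 <= j < c.+1) pi j = 1) (rb_le_Rb : rb <= Rb).
Hypothesis Rbxs_le_b : Rb * xs <= b.
Hypothesis g_below : forall j, (1 <= j <= c)%N ->
  g (x j) <= Num.min (Rb * x j + b - Rb * xs) (rb * x j + b - rb * xs).

Lemma gap_ge_mean_shortfall :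
  xs * (rb * mean_stock / c%:R + (Rb - rb) * (pi 0%N + shortfall / xs))
    <= b - \sum_(1 <= j < c.+1) pi j * g (x j).
Proof.
have gap_split : b - \sum_(1 <= j < c.+1) pi j * g (x j)
    = b * pi 0%N + \sum_(1 <= j < c.+1) pi j * (b - g (x j)).
  rewrite -{1}[b]mulr1 -pi_sum1 big_ltn // mulrDr -addrA; congr (_ + _).
  by rewrite mulr_sumr -sumrB; apply: eq_bigr => j _; rewrite mulrBr mulrC.
have terms_ge : rb * \sum_(1 <= j < c.+1) pi j * (xs - x j) + (Rb - rb) * shortfall
    <= \sum_(1 <= j < c.+1) pi j * (b - g (x j)).
  rewrite /shortfall !mulr_sumr -big_split /=; apply: ler_sum_nat => j /andP [j_ge1 j_le_c].
  rewrite mulrCA [(Rb - rb) * _]mulrCA -mulrDr ler_wpM2l ?pi_ge0 //.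
  by apply: kinked_gap_ge rb_le_Rb _; apply: g_below; rewrite j_ge1.
have state0_ge : Rb * xs * pi 0%N <= b * pi 0%N by rewrite ler_wpM2r ?pi_ge0.
have -> : xs * (rb * mean_stock / c%:R + (Rb - rb) * (pi 0%N + shortfall / xs))
    = rb * (xs * (mean_stock / c%:R - pi 0%N)) + (Rb - rb) * shortfall + Rb * xs * pi 0%N.
  by field; rewrite c_neq0 gt_eqF.
rewrite gap_split -sum_gap_mean_stock; lra.
Qed.

End BalanceEquations.

Lemma tradeoff_bound (R : realFieldType) (m r k N B E : R) :
  0 <= m -> m <= 1 -> m <= r / 2 -> 0 <= r -> 0 < k -> 0 <= B ->
  k / 2 <= N -> N <= k -> N * (1 - N * B) <= E -> 0 <= E ->
  m * k <= r * E + k ^+ 2 * B.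
Proof.
move=> m_ge0 m_le1 m_le_r2 r_ge0 k_gt0 B_ge0 N_ge N_le E_ge E_ge0.
have k_ge0 := ltW k_gt0.
have k2B_ge0 : 0 <= k ^+ 2 * B by rewrite mulr_ge0 ?sqr_ge0.
have k2B_eq : k ^+ 2 * B = k * (k * B) by rewrite expr2 mulrA.
case: (lerP 1 (k * B)) => [kB_ge1 | kB_lt1].
  have rE_ge0 : 0 <= r * E by rewrite mulr_ge0.
  have : m * k <= 1 * (k * (k * B)).
    by apply: ler_pM => //; rewrite ler_pMr.
  lra.
have NB_le_kB : N * B <= k * B by rewrite ler_wpM2r.
have mk_le_rN : m * k <= r * N.
  apply: (@le_trans _ _ (r / 2 * k)); first by rewrite ler_wpM2r.
  have -> : r / 2 * k = r * (k / 2) by ring.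
  by rewrite ler_wpM2l.
have head : m * k * (1 - k * B) <= r * E.
  apply: (@le_trans _ _ (r * N * (1 - N * B))); last first.
    by rewrite -mulrA ler_wpM2l.
  apply: ler_pM => //; first exact: mulr_ge0.
    by rewrite subr_ge0 ltW.
  by rewrite lerD2l lerN2.
have tail : m * (k ^+ 2 * B) <= k ^+ 2 * B by rewrite ler_piMl.
have -> : m * k = m * k * (1 - k * B) + m * (k ^+ 2 * B) by rewrite k2B_eq; ring.
lra.
Qed.

Lemma min_sqrt_le_of_markov (R : realType) (c : nat) (r Rb E B : R) :
  0 < r -> r < Rb -> 1 / (Rb - r) <= c%:R -> 0 <= B ->
  (forall N : nat, N%:R * (1 - N%:R * B) <= E) ->
  Num.min 1 (r / 2) * Num.sqrt ((Rb - r) / c%:R) <= r * E / c%:R + (Rb - r) * B.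
Proof.
move=> r_gt0 r_lt_Rb c_large B_ge0 markov.
have E_ge0 : 0 <= E by have := markov 0%N; rewrite mul0r.
have Rr_gt0 : 0 < Rb - r by rewrite subr_gt0.
have c_gt0 : 0 < c%:R :> R by apply: lt_le_trans c_large; rewrite divr_gt0.
set eps := Num.sqrt _.
have eps_gt0 : 0 < eps by rewrite sqrtr_gt0 divr_gt0.
have eps2 : eps ^+ 2 * c%:R = Rb - r.
  by rewrite sqr_sqrtr ?divfK ?gt_eqF // divr_ge0 // ltW.
set k := eps * c%:R.
have k_ge1 : 1 <= k.
  have k2 : k ^+ 2 = (Rb - r) * c%:R by rewrite -eps2 /k; ring.
  have : 1 <= k ^+ 2 by rewrite k2 mulrC -ler_pdivrMr.
  have : 0 <= k by rewrite mulr_ge0 // ltW.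
  nra.
set N := Num.truncn k.
have N_le_k : N%:R <= k by rewrite truncn_le (le_trans ler01).
have k_lt_N1 : k < N%:R + 1 by rewrite natr1; exact: truncnS_gt.
have N_ge1 : 1 <= N%:R :> R by rewrite ler1n truncn_gt0.
have N_ge : k / 2 <= N%:R by lra.
have m_ge0 : 0 <= Num.min 1 (r / 2) by rewrite le_min ler01 divr_ge0 // ltW.
have m_le1 : Num.min 1 (r / 2) <= 1 by rewrite ge_min lexx.
have m_le_r2 : Num.min 1 (r / 2) <= r / 2 by rewrite ge_min lexx orbT.
have trade := tradeoff_bound m_ge0 m_le1 m_le_r2 (ltW r_gt0)
  (lt_le_trans ltr01 k_ge1) B_ge0 N_ge N_le_k (markov N) E_ge0.
rewrite -(ler_pM2r c_gt0) mulrDl divfK ?gt_eqF // -mulrA.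
have -> : (Rb - r) * B * c%:R = k ^+ 2 * B by rewrite -eps2 /k; ring.
exact: trade.
Qed.

Theorem lemma5 (R : realType) (c : nat) (lam d : R) (g : R -> R) (Rb rb : R) :
  0 < lam -> 0 < d ->
  0 < xstar c lam d < 1 ->
  concave01 g -> nondecr01 g -> g 0 = 0 ->
  0 < rb -> rb < Rb ->
  (forall x : R, 0 <= x <= 1 ->
     g x <= Num.min (Rb * x + g (xstar c lam d) - Rb * xstar c lam d)
                    (rb * x + g (xstar c lam d) - rb * xstar c lam d)) ->
  1 / (Rb - rb) <= c%:R ->
  forall (x pi : nat -> R), policy c x -> steady_state c lam d x pi ->
    lam * Num.min 1 (rb / 2) * xstar c lam d * Num.sqrt ((Rb - rb) / c%:R)
      <= lam * g (xstar c lam d) - reward c lam g x pi.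
Proof.
move=> lam_gt0 d_gt0 /andP [xs_gt0 _] _ _ g0 rb_gt0 rb_lt_Rb g_below c_large x pi
  x_policy pi_steady.
have [pi_ge0 pi_sum1 _] := pi_steady.
set xs := xstar c lam d in xs_gt0 g_below pi_steady *.
have c_neq0 : c%:R != 0 :> R.
  by rewrite gt_eqF // (lt_le_trans _ c_large) // divr_gt0 // subr_gt0.
have balance := steady_state_balance lam_gt0 d_gt0 c_neq0 pi_steady.
have Rbxs_le_b : Rb * xs <= g xs.
  by have := g_below 0; rewrite g0 lexx ler01 le_min => /(_ isT) /andP [? _]; lra.
have gap := gap_ge_mean_shortfall c_neq0 balance pi_ge0 xs_gt0 pi_sum1 (ltW rb_lt_Rb)
  Rbxs_le_b (fun j j_range => g_below _ (x_policy j j_range)).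
have B_ge0 : 0 <= pi 0%N + shortfall c xs x pi / xs.
  by rewrite addr_ge0 ?pi_ge0 // divr_ge0 ?shortfall_ge0 // ltW.
have trade := min_sqrt_le_of_markov rb_gt0 rb_lt_Rb c_large B_ge0
  (fun N => mean_ge_of_bounded_probs N pi_ge0 pi_sum1 (pi_le_shortfall c_neq0 balance pi_ge0 xs_gt0)).
have -> : reward c lam g x pi = lam * \sum_(1 <= j < c.+1) pi j * g (x j).
  by rewrite /reward mulr_sumr; apply: eq_bigr => j _; rewrite mulrAC mulrC.
rewrite -mulrBr -2!mulrA; apply: ler_wpM2l; first exact: ltW.
rewrite mulrCA; apply: le_trans gap; apply: ler_wpM2l; first exact: ltW.
exact: trade.
Qed.
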